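(* Let $a\geq 1$ and $b\geq 2$ be integers. Then for Lebesgue-almost every $x\in A$ we have $\lim_{k\to\infty}T_{a,b}^k(x)\neq(0,\ldots,0)$.
   Context: For $n\geq 1$ let $\Lambda^n=\{x\in\mathbb{R}^n : 0\leq x_1\leq\cdots\leq x_n\}$. For integers $a,b\geq 1$ the map $T_{a,b}:\Lambda^{a+b}\to\Lambda^{a+b}$ sends $x$ to the vector obtained by arranging $x_1,\ldots,x_a,\,x_{a+1}-x_a,\ldots,x_{a+b}-x_a$ in nondecreasing order (each coordinate sequence of the orbit is nonincreasing, so the limit exists). $A=\{x\in\Lambda^{a+b}: x_1+\cdots+x_{a+b}\leq b\,x_{a+b}\}$. *)

From HB Require Import structures.
From mathcomp Require Import all_boot all_order all_algebra.
From mathcomp Require Import all_classical all_reals all_analysis.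
Set Implicit Arguments. Unset Strict Implicit. Unset Printing Implicit Defensive.
Import Order.TTheory GRing.Theory Num.Theory.
Import numFieldNormedType.Exports.
Local Open Scope classical_set_scope.
Local Open Scope ring_scope.

(* Points of R^n are row vectors 'rV[R]_n; coordinates are 0-indexed:
   x_1,...,x_n of the paper are x 0 0, ..., x 0 (n-1). *)

Definition coord (R : realType) (n : nat) (x : 'rV[R]_n) (k : nat) : R :=
  nth 0 [seq x 0 i | i <- enum 'I_n] k.

Definition Lambda (R : realType) (n : nat) : set 'rV[R]_n :=
  [set x | (forall i : 'I_n, 0 <= x 0 i) /\
           (forall i j : 'I_n, (i <= j)%N -> x 0 i <= x 0 j)].

(* T_{a,b}: arrange x_1,...,x_a, x_{a+1}-x_a, ..., x_{a+b}-x_a in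
   nondecreasing order.  (Index a.-1 is the paper's x_a; a >= 1.) *)
Definition Tab (R : realType) (a b : nat) (x : 'rV[R]_(a + b)) : 'rV[R]_(a + b) :=
  let xa := coord x a.-1 in
  let y := [seq (if (i < a)%N then x 0 i else x 0 i - xa) | i : 'I_(a + b) <- enum 'I_(a + b)] in
  let s := sort <=%R y in
  \row_i nth 0 s i.

Definition Aset (R : realType) (a b : nat) : set 'rV[R]_(a + b) :=
  [set x | Lambda x /\
     \sum_(i < a + b) x 0 i <= b%:R * coord x (a + b).-1].

Definition box (R : realType) (n : nat) (lo hi : 'rV[R]_n) : set 'rV[R]_n :=
  [set x | forall i : 'I_n, lo 0 i <= x 0 i <= hi 0 i].

Definition lebesgue_null (R : realType) (n : nat) (N : set 'rV[R]_n) : Prop :=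
  forall eps : R, 0 < eps ->
    exists lo hi : nat -> 'rV[R]_n,
      (forall k (i : 'I_n), lo k 0 i <= hi k 0 i) /\
      N `<=` \bigcup_k box (lo k) (hi k) /\
      (forall m : nat, \sum_(k < m) \prod_(i < n) (hi k 0 i - lo k 0 i) <= eps).

Arguments Tab {R} a b x.
Arguments Aset {R} a b x.

From Pilot Require Import Defs.
From HB Require Import structures.
From mathcomp Require Import all_boot all_order all_algebra.
From mathcomp Require Import all_classical all_reals all_analysis.
From mathcomp Require Import zify ring lra.
Import Order.TTheory GRing.Theory Num.Theory.
Import numFieldNormedType.Exports.
Local Open Scope classical_set_scope.
Local Open Scope ring_scope.

Set Implicit Arguments.
Unset Strict Implicit.
Unset Printing Implicit Defensive.

(* On [Lambda], [T_{a,b}] only decreases coordinates, so every orbit converges.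
   Let [slack x = b x_{a+b} - (x_1 + ... + x_{a+b})], so that [A] is [slack >= 0].
   One step of [T_{a,b}] lowers the coordinate sum by exactly [b x_a], while its
   largest coordinate is still at least [x_{a+b} - x_a]; hence [slack] does not
   decrease along orbits. As [slack <= (b - 1) x_{a+b}] on [Lambda], an orbit
   starting with [slack x > 0] keeps its last coordinate above
   [slack x / (b - 1) > 0], and so does its limit. The remaining points of [A]
   lie on the hyperplane [slack = 0]; each bounded piece of it is covered by a
   grid of finitely many boxes of arbitrarily small total volume, and countably
   many pieces exhaust it. *)

Lemma sorted_nth_le_count d (T : porderType d) (x0 v : T) (s : seq T) (i : nat) :
  sorted <=%O s -> (i < count (fun z => (z <= v)%O) s)%N -> (nth x0 s i <= v)%O.
Proof.
elim: s i => [|h t IH] [|i] //= s_sorted.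
- case: (boolP (h <= v)%O) => // hv; rewrite add0n -has_count => /hasP [z zt zv].
  have /allP /(_ z zt) hz := order_path_min (@le_trans _ T) s_sorted.
  by rewrite (le_trans hz zv) in hv.
- move=> lt_i_cnt; apply: IH; first exact: path_sorted s_sorted.
  by move: lt_i_cnt; case: (h <= v)%O => /=; lia.
Qed.

Lemma count_iota_leq i m : count (fun k => (k <= i)%N) (iota 0 m) = minn m i.+1.
Proof.
elim: m => [|m IH] //; rewrite -addn1 iotaD count_cat IH /= add0n addn0.
by case: (leqP m i) => le_mi; lia.
Qed.

Lemma count_enum_ord_leq n (i : nat) : (i < n)%N ->
  count (fun j : 'I_n => (j <= i)%N) (enum 'I_n) = i.+1.
Proof.
by move=> lt_in; rewrite -(count_map val (fun k => (k <= i)%N)) val_enum_ord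
  count_iota_leq; lia.
Qed.

Lemma coordE (R : realType) n (x : 'rV[R]_n) (i : 'I_n) : Defs.coord x i = x 0 i.
Proof.
rewrite /Defs.coord (nth_map i) ?size_enum_ord //.
by congr (x 0 _); apply: val_inj; rewrite /= nth_enum_ord.
Qed.

Lemma cvg_row_entries (R : realType) n (u : nat -> 'rV[R]_n) (l : 'rV[R]_n) :
  (forall i, (fun k => u k 0 i) @ \oo --> l 0 i) -> u @ \oo --> l.
Proof.
move=> u_cvg; apply/cvg_mx_entourageP => A entA.
apply: filter_forall => i; apply: filter_forall => j; rewrite (ord1 i).
have [N _ uN] := cvg_entourage (u_cvg j) entA.
by exists N => // k kN; apply/mem_set; exact: uN.
Qed.

Section Dynamics.
Context {R : realType} {a b : nat}.
Hypothesis a_gt0 : (0 < a)%N.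
Implicit Types x : 'rV[R]_(a + b).

Definition idx_a : 'I_(a + b) := Ordinal (ltn_addr b (etrans (ltn_predL a) a_gt0)).
Definition idx_last : 'I_(a + b) :=
  Ordinal (etrans (ltn_predL (a + b)) (ltn_addr b a_gt0)).

Lemma coord_a x : Defs.coord x a.-1 = x 0 idx_a.
Proof. exact (coordE x idx_a). Qed.

Lemma coord_last x : Defs.coord x (a + b).-1 = x 0 idx_last.
Proof. exact (coordE x idx_last). Qed.

Definition shifted x (i : 'I_(a + b)) : R :=
  if (i < a)%N then x 0 i else x 0 i - Defs.coord x a.-1.

Definition Tab_seq x := sort <=%R [seq shifted x i | i <- enum 'I_(a + b)].

Lemma TabE x i : Tab a b x 0 i = nth 0 (Tab_seq x) i.
Proof. by rewrite mxE. Qed.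

Lemma size_Tab_seq x : size (Tab_seq x) = (a + b)%N.
Proof. by rewrite size_sort size_map size_enum_ord. Qed.

Lemma sorted_Tab_seq x : sorted <=%R (Tab_seq x).
Proof. exact/sort_sorted/le_total. Qed.

Lemma perm_Tab_seq x : perm_eq (Tab_seq x) [seq shifted x i | i <- enum 'I_(a + b)].
Proof. by rewrite perm_sort. Qed.

Lemma Tab_seq_leq_nth x (i j : nat) : (i <= j < a + b)%N ->
  nth 0 (Tab_seq x) i <= nth 0 (Tab_seq x) j.
Proof.
move=> /andP [le_ij lt_j].
apply: (sorted_leq_nth le_trans lexx 0 (sorted_Tab_seq x)) => //;
  rewrite inE size_Tab_seq //; exact: leq_ltn_trans lt_j.
Qed.

Lemma shifted_ge0 x i : Lambda x -> 0 <= shifted x i.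
Proof.
move=> [x_ge0 x_incr]; rewrite /shifted coord_a; case: ifP => // /negbT.
by rewrite -leqNgt subr_ge0 => le_ai; apply: x_incr => /=; lia.
Qed.

Lemma shifted_le x i : Lambda x -> shifted x i <= x 0 i.
Proof.
move=> [x_ge0 _]; rewrite /shifted coord_a; case: ifP => // _.
by rewrite lerBlDr lerDl.
Qed.

Lemma Lambda_Tab x : Lambda x -> Lambda (Tab a b x).
Proof.
move=> Lx; split => [i|i j le_ij]; rewrite !TabE.
  have : nth 0 (Tab_seq x) i \in [seq shifted x i | i <- enum 'I_(a + b)].
    by rewrite -(perm_mem (perm_Tab_seq x)) mem_nth // size_Tab_seq.
  by case/mapP => j _ ->; exact: shifted_ge0.
by apply: Tab_seq_leq_nth; rewrite le_ij ltn_ord.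
Qed.

(* At least [i + 1] of the shifted entries are [<= x_i], namely those of index [<= i]. *)
Lemma Tab_le x i : Lambda x -> Tab a b x 0 i <= x 0 i.
Proof.
move=> Lx; rewrite TabE; apply: sorted_nth_le_count; first exact: sorted_Tab_seq.
rewrite (permP (perm_Tab_seq x)) count_map -(count_enum_ord_leq (ltn_ord i)).
apply: sub_count => j /= le_ji.
exact: le_trans (shifted_le j Lx) (Lx.2 _ _ le_ji).
Qed.

Lemma sum_Tab x : \sum_i Tab a b x 0 i = \sum_i x 0 i - b%:R * x 0 idx_a.
Proof.
under eq_bigr do rewrite TabE.
have -> : \sum_(i < a + b) nth 0 (Tab_seq x) i = \sum_(v <- Tab_seq x) v.
  by rewrite (big_nth 0) size_Tab_seq big_mkord.
rewrite (perm_big _ (perm_Tab_seq x)) big_map big_enum /= !big_split_ord /=.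
have -> : \sum_(i < a) shifted x (lshift b i) = \sum_(i < a) x 0 (lshift b i).
  by apply: eq_bigr => i _; rewrite /shifted /= ltn_ord.
have -> : \sum_(i < b) shifted x (rshift a i) =
          \sum_(i < b) x 0 (rshift a i) - \sum_(i < b) x 0 idx_a.
  rewrite -sumrB; apply: eq_bigr => i _.
  by rewrite /shifted /= ltnNge leq_addr /= coord_a.
by rewrite sumr_const card_ord -mulr_natl; ring.
Qed.

Hypothesis b_gt0 : (0 < b)%N.

Lemma Tab_last_ge x : Lambda x -> x 0 idx_last - x 0 idx_a <= Tab a b x 0 idx_last.
Proof.
move=> Lx.
have mem_last : x 0 idx_last - x 0 idx_a \in Tab_seq x.
  rewrite (perm_mem (perm_Tab_seq x)); apply/mapP; exists idx_last; rewrite ?mem_enum //.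
  by rewrite /shifted coord_a /= ifF //; apply/negbTE; rewrite -leqNgt; lia.
rewrite TabE -(nth_index 0 mem_last); apply: Tab_seq_leq_nth.
have := index_mem (x 0 idx_last - x 0 idx_a) (Tab_seq x).
by rewrite mem_last size_Tab_seq => lt_k; rewrite -ltnS prednK ?addn_gt0 ?a_gt0 // lt_k leqnn.
Qed.

Definition slack x : R := b%:R * x 0 idx_last - \sum_i x 0 i.

Lemma slack_Tab x : Lambda x -> slack x <= slack (Tab a b x).
Proof.
move=> Lx; rewrite /slack sum_Tab.
have : b%:R * (x 0 idx_last - x 0 idx_a) <= b%:R * Tab a b x 0 idx_last.
  by rewrite ler_wpM2l ?ler0n ?Tab_last_ge.
lra.
Qed.

Lemma slack_le x : Lambda x -> slack x <= (b%:R - 1) * x 0 idx_last.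
Proof.
move=> [x_ge0 _]; rewrite /slack (bigD1 idx_last) //=.
have : 0 <= \sum_(i < a + b | i != idx_last) x 0 i by apply: sumr_ge0.
lra.
Qed.

Lemma Lambda_iter x k : Lambda x -> Lambda (iter k (Tab a b) x).
Proof. by move=> Lx; elim: k => //= k; apply: Lambda_Tab. Qed.

Lemma slack_iter x k : Lambda x -> slack x <= slack (iter k (Tab a b) x).
Proof.
move=> Lx; elim: k => //= k IH.
exact: le_trans IH (slack_Tab (Lambda_iter k Lx)).
Qed.

Lemma Tab_orbit_entry_cvg x i : Lambda x -> cvgn (fun k => iter k (Tab a b) x 0 i).
Proof.
move=> Lx; apply: nonincreasing_is_cvgn.
  by apply/nonincreasing_seqP => k; rewrite iterS; apply/Tab_le/Lambda_iter.
by exists 0 => _ [k _ <-]; exact: (Lambda_iter k Lx).1.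
Qed.

Lemma Tab_orbit_cvg x : Lambda x ->
  (fun k => iter k (Tab a b) x) @ \oo --> \row_i limn (fun k => iter k (Tab a b) x 0 i).
Proof.
move=> Lx; apply: cvg_row_entries => i; rewrite mxE.
exact: Tab_orbit_entry_cvg.
Qed.

Hypothesis b_gt1 : (1 < b)%N.

Lemma Tab_orbit_limit_neq0 x : Lambda x -> 0 < slack x ->
  exists l : 'rV[R]_(a + b), (fun k => iter k (Tab a b) x) @ \oo --> l /\ l != 0.
Proof.
move=> Lx slack_gt0; eexists; split; first exact: Tab_orbit_cvg.
have b1_gt0 : 0 < b%:R - 1 :> R by rewrite subr_gt0 ltr1n.
have lim_ge : slack x / (b%:R - 1) <= limn (fun k => iter k (Tab a b) x 0 idx_last).
  apply: limr_ge (@Tab_orbit_entry_cvg x idx_last Lx) _; apply: nearW => k.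
  rewrite ler_pdivrMr // mulrC.
  exact: le_trans (slack_iter k Lx) (slack_le (Lambda_iter k Lx)).
apply/eqP => /(congr1 (fun l : 'rV_(a + b) => l 0 idx_last)); rewrite !mxE => lim0.
by move: lim_ge; rewrite lim0 ler_pdivrMr // mul0r leNgt slack_gt0.
Qed.

End Dynamics.

Section BoxCovers.
Context {R : realType} {n : nat}.

Definition box_volume (p : 'rV[R]_n * 'rV[R]_n) : R := \prod_(i < n) (p.2 0 i - p.1 0 i).

Definition jordan_null (S : set 'rV[R]_n) := forall e : R, 0 < e ->
  exists s : seq ('rV[R]_n * 'rV[R]_n),
    [/\ forall p, p \in s -> forall i, p.1 0 i <= p.2 0 i,
        forall x, S x -> exists2 p, p \in s & box p.1 p.2 x &
        \sum_(p <- s) box_volume p <= e].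

End BoxCovers.

Lemma cell_index (R : realType) (K : nat) (h t : R) : (0 < K)%N -> 0 < h ->
  0 <= t <= K%:R * h -> exists j : 'I_K, h * j%:R <= t <= h * j%:R + h.
Proof.
move=> K_gt0 h_gt0 /andP [t_ge0 t_le].
have th_ge0 : 0 <= t / h by rewrite divr_ge0 // ltW.
have [lt_tK | le_Kt] := ltnP (Num.truncn (t / h)) K.
  exists (Ordinal lt_tK) => /=; have /andP [lo hi] := truncn_itv th_ge0.
  rewrite -ler_pdivlMl // [_ * t]mulrC lo /= -[X in _ + X]mulr1 -mulrDr natr1.
  by rewrite -ler_pdivrMl // [_ * t]mulrC ltW.
have lt_predK : (K.-1 < K)%N by rewrite prednK.
exists (Ordinal lt_predK) => /=; apply/andP; split.
  rewrite -ler_pdivlMl // mulrC (le_trans _ (_ : K%:R <= t / h)) ?ler_nat ?leq_pred //.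
  by rewrite -truncn_ge_nat.
by rewrite -[X in _ + X]mulr1 -mulrDr natr1 prednK // mulrC.
Qed.

Section Grid.
Variables (R : realType) (n : nat) (il : 'I_n) (c M : R) (K : nat).
Hypotheses (n_gt1 : (1 < n)%N) (c_gt0 : 0 < c) (M_gt0 : 0 < M) (K_gt0 : (0 < K)%N).
Local Notation m := n.-1.

Let cell : R := M / K%:R.
Let height : R := m%:R * cell / c / K%:R.

Let cell_gt0 : 0 < cell. Proof. by rewrite divr_gt0 ?ltr0n. Qed.
Let height_gt0 : 0 < height.
Proof. apply: divr_gt0; rewrite ?ltr0n // divr_gt0 // mulr_gt0 // ltr0n; lia. Qed.

Definition grid_offset (d : {ffun 'I_n -> 'I_K}) : R :=
  cell * \sum_(i | i != il) (d i)%:R.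

(* Off [il], [d] selects a grid cell of side [cell]. A point of that cell on the
   hyperplane has its [il]-coordinate in [grid_offset d / c + [0, m * cell / c]];
   this interval is cut into [K] slices of length [height], and [d il] selects one. *)
Definition grid_box (d : {ffun 'I_n -> 'I_K}) : 'rV[R]_n * 'rV[R]_n :=
  (\row_i (if i == il then grid_offset d / c + height * (d i)%:R else cell * (d i)%:R),
   \row_i (if i == il then grid_offset d / c + height * (d i)%:R + height
           else cell * (d i)%:R + cell)).

Lemma grid_box_le d i : (grid_box d).1 0 i <= (grid_box d).2 0 i.
Proof. by rewrite !mxE; case: ifP => _; rewrite lerDl ltW. Qed.

Lemma box_volume_grid_box d : box_volume (grid_box d) = height * cell ^+ m.
Proof.
rewrite /box_volume (bigD1 il) //= !mxE eqxx addrAC subrr add0r.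
rewrite (eq_bigr (fun _ => cell)) => [|i /negbTE ne_iil]; last first.
  by rewrite !mxE ne_iil addrAC subrr add0r.
by rewrite prodr_const cardC1 card_ord.
Qed.

Lemma grid_cover (x : 'rV[R]_n) : (forall i, 0 <= x 0 i <= M) ->
  \sum_(i | i != il) x 0 i = c * x 0 il ->
  exists d, box (grid_box d).1 (grid_box d).2 x.
Proof.
move=> x_bound x_rel.
have cells i : exists j : 'I_K, cell * j%:R <= x 0 i <= cell * j%:R + cell.
  apply: cell_index => //.
  by rewrite /cell mulrC divfK ?pnatr_eq0 -?lt0n ?x_bound.
have [f f_cell] := fin_all_exists cells.
pose off := cell * \sum_(i | i != il) (f i)%:R.
have off_le : off <= c * x 0 il.
  by rewrite -x_rel /off mulr_sumr; apply: ler_sum => i _; case/andP: (f_cell i).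
have le_off : c * x 0 il <= off + m%:R * cell.
  rewrite -x_rel (@le_trans _ _ (\sum_(i | i != il) (cell * (f i)%:R + cell))) //.
    by apply: ler_sum => i _; case/andP: (f_cell i).
  by rewrite big_split /= -mulr_sumr sumr_const cardC1 card_ord mulr_natl.
have [j j_slice] : exists j : 'I_K,
    height * j%:R <= x 0 il - off / c <= height * j%:R + height.
  apply: cell_index => //; rewrite subr_ge0 ler_pdivrMr // mulrC off_le /=.
  rewrite lerBlDl /height [K%:R * _]mulrC divfK ?pnatr_eq0 -?lt0n //.
  by rewrite -mulrDl ler_pdivlMr // mulrC.
exists [ffun i => if i == il then j else f i] => i; rewrite !mxE ffunE.
have -> : grid_offset [ffun i => if i == il then j else f i] = off.
  by congr (_ * _); apply: eq_bigr => k /negbTE ne_kil; rewrite ffunE ne_kil.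
by case: eqP => [->|_]; [move: j_slice => /andP [? ?]; apply/andP; split; lra | exact: f_cell].
Qed.

Lemma grid_total_volume :
  \sum_(d : {ffun 'I_n -> 'I_K}) box_volume (grid_box d) = m%:R * M ^+ n / (c * K%:R).
Proof.
have n_eq : n = m.+1 by rewrite prednK //; lia.
under eq_bigr do rewrite box_volume_grid_box.
rewrite sumr_const card_ffun !card_ord -[_ *+ K ^ n]mulr_natr natrX /height /cell n_eq /=.
rewrite expr_div_n !exprS; field.
by rewrite !gt_eqF ?exprn_gt0 ?ltr0n.
Qed.

End Grid.

Lemma jordan_null_hyperplane_slice (R : realType) n (il : 'I_n) (c M : R)
    (S : set 'rV[R]_n) :
  (1 < n)%N -> 0 < c -> 0 < M ->
  (forall x, S x -> (forall i, 0 <= x 0 i <= M) /\ \sum_(i | i != il) x 0 i = c * x 0 il) ->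
  jordan_null S.
Proof.
move=> n_gt1 c_gt0 M_gt0 S_slice e e_gt0.
pose q := n.-1%:R * M ^+ n / (c * e).
pose K := (Num.truncn q).+1.
exists [seq grid_box il c M d | d <- enum {ffun 'I_n -> 'I_K}]; split.
- by move=> _ /mapP [d _ ->]; exact: grid_box_le.
- move=> x /S_slice [x_bound x_rel].
  have [d x_in] := grid_cover (K := K) n_gt1 c_gt0 M_gt0 (ltn0Sn _) x_bound x_rel.
  by exists (grid_box il c M d) => //; apply: map_f; rewrite mem_enum.
rewrite big_map big_enum /= grid_total_volume // ler_pdivrMr ?mulr_gt0 ?ltr0n //.
have : q < K%:R := truncnS_gt q.
rewrite ltr_pdivrMr ?mulr_gt0 // => /ltW /le_trans; apply.
by rewrite [e * _]mulrC mulrA [K%:R * c]mulrC.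
Qed.

Section ConcatSeq.
Variables (T : eqType) (d : T) (g : nat -> seq T).

Let prefix M := flatten [seq g j | j <- iota 0 M.+1].

(* The [k]-th entry of the infinite concatenation [g 0 ++ g 1 ++ ...]; once all
   [g j] are nonempty, [prefix k] is long enough to contain it. *)
Definition concat_seq k := nth d (prefix k) k.

Hypothesis g_nonempty : forall j, (0 < size (g j))%N.

Let prefixS M : prefix M.+1 = prefix M ++ g M.+1.
Proof. by rewrite /prefix -addn1 iotaD map_cat flatten_cat /= cats0. Qed.

Let size_prefix M : (M < size (prefix M))%N.
Proof.
elim: M => [|M IH]; first by rewrite /prefix /= cats0 g_nonempty.
by rewrite prefixS size_cat; have := g_nonempty M.+1; lia.
Qed.

Let prefix_cat M M' : (M <= M')%N -> exists r, prefix M' = prefix M ++ r.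
Proof.
move=> le_MM'; rewrite -(subnKC le_MM'); elim: (M' - M)%N => [|k [r IH]].
  by exists [::]; rewrite addn0 cats0.
by exists (r ++ g (M + k).+1); rewrite addnS prefixS IH catA.
Qed.

Let concat_seqE M k : (k < size (prefix M))%N -> concat_seq k = nth d (prefix M) k.
Proof.
move=> lt_kM; have lt_kk := size_prefix k; rewrite /concat_seq.
have [le_kM|lt_Mk] := leqP k M.
  by have [r ->] := prefix_cat le_kM; rewrite nth_cat lt_kk.
by have [r ->] := prefix_cat (ltnW lt_Mk); rewrite nth_cat lt_kM.
Qed.

Let mem_prefix p M : p \in prefix M -> exists j, p \in g j.
Proof. by case/flatten_mapP => j _ p_in; exists j. Qed.

Lemma concat_seq_mem k : exists j, concat_seq k \in g j.
Proof. by apply: (@mem_prefix _ k); rewrite mem_nth. Qed.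

Lemma concat_seq_onto j p : p \in g j -> exists k, concat_seq k = p.
Proof.
move=> p_in; have p_pre : p \in prefix j.
  by apply/flatten_mapP; exists j; rewrite ?mem_iota //= add0n.
by exists (index p (prefix j)); rewrite (concat_seqE (M := j)) ?index_mem ?nth_index.
Qed.

Lemma sum_concat_seq_le (R : numDomainType) (F : T -> R) m :
  (forall j p, p \in g j -> 0 <= F p) ->
  \sum_(k < m) F (concat_seq k) <= \sum_(j < m.+1) \sum_(p <- g j) F p.
Proof.
move=> F_ge0; have lt_m := size_prefix m.
have -> : \sum_(k < m) F (concat_seq k) = \sum_(0 <= k < m) F (nth d (prefix m) k).
  rewrite big_mkord; apply: eq_bigr => k _.
  by rewrite (concat_seqE (M := m)) // (ltn_trans (ltn_ord k)).
have -> : \sum_(j < m.+1) \sum_(p <- g j) F p = \sum_(p <- prefix m) F p.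
  by rewrite big_flatten big_map -val_enum_ord big_map big_enum.
rewrite (big_nth d) (big_cat_nat _ (n := m) (p := size (prefix m))) //= ?(ltnW lt_m) //.
rewrite lerDl big_nat_cond; apply: sumr_ge0 => k /andP [/andP [_ lt_k] _].
by have [j] := mem_prefix (mem_nth d lt_k); apply: F_ge0.
Qed.

End ConcatSeq.

Lemma sum_div_exp2S (R : numFieldType) (e : R) N :
  \sum_(j < N) e / 2 ^+ j.+1 = e - e / 2 ^+ N.
Proof.
elim: N => [|N IH]; first by rewrite big_ord0 expr0 divr1 subrr.
rewrite big_ord_recr /= IH exprS; field.
by rewrite expf_neq0 // pnatr_eq0.
Qed.

Lemma lebesgue_null_bigcup (R : realType) n (S : nat -> set 'rV[R]_n) : (0 < n)%N ->
  (forall j, jordan_null (S j)) -> lebesgue_null (\bigcup_j S j).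
Proof.
move=> n_gt0 S_null e e_gt0.
have /choice [f f_cover] j : exists s : seq ('rV[R]_n * 'rV[R]_n),
    [/\ forall p, p \in s -> forall i, p.1 0 i <= p.2 0 i,
        forall x, S j x -> exists2 p, p \in s & box p.1 p.2 x &
        \sum_(p <- s) box_volume p <= e / 2 ^+ j.+1].
  by apply: S_null; rewrite divr_gt0 ?exprn_gt0.
pose zero_box : 'rV[R]_n * 'rV[R]_n := (0, 0).
have zero_box_volume : box_volume zero_box = 0.
  by rewrite /box_volume (bigD1 (Ordinal n_gt0)) //= !mxE subrr mul0r.
(* Padding every list with a null box makes them nonempty, as [concat_seq] needs. *)
pose g j := zero_box :: f j.
have g_nonempty j : (0 < size (g j))%N by [].
have g_le j p : p \in g j -> forall i, p.1 0 i <= p.2 0 i.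
  rewrite inE => /predU1P [-> i|p_in]; first by rewrite mxE.
  by have [f_le _ _] := f_cover j; apply: f_le.
pose B := concat_seq zero_box g.
exists (fun k => (B k).1), (fun k => (B k).2); split; [|split].
- by move=> k; have [j] := concat_seq_mem zero_box g_nonempty k; apply: g_le.
- move=> x [j _ Sx]; have [_ f_box _] := f_cover j; have [p p_in x_in] := f_box x Sx.
  have p_in_g : p \in g j by rewrite inE p_in orbT.
  have [k Bk] := concat_seq_onto zero_box g_nonempty p_in_g.
  by exists k => //; rewrite /B Bk.
move=> m; change (\sum_(k < m) box_volume (B k) <= e).
apply: le_trans (sum_concat_seq_le zero_box g_nonempty (F := box_volume) m _) _.
  by move=> j p /g_le p_le; apply: prodr_ge0 => i _; rewrite subr_ge0.
apply: le_trans (_ : \sum_(j < m.+1) e / 2 ^+ j.+1 <= e).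
  apply: ler_sum => j _; rewrite big_cons zero_box_volume add0r.
  by have [_ _] := f_cover j.
by rewrite sum_div_exp2S gerDl oppr_le0 divr_ge0 ?exprn_ge0 ?ltW.
Qed.

Lemma jordan_null_slack_eq0 (R : realType) (a b : nat) (a_gt0 : (0 < a)%N)
    (b_gt1 : (1 < b)%N) (M : R) : 0 < M ->
  jordan_null [set x : 'rV[R]_(a + b) |
    [/\ Lambda x, slack a_gt0 x = 0 & x 0 (idx_last a_gt0) <= M]].
Proof.
move=> M_gt0; apply: (@jordan_null_hyperplane_slice _ _ (idx_last a_gt0) (b%:R - 1) M).
- by rewrite ltn_addl.
- by rewrite subr_gt0 ltr1n.
- done.
move=> x [[x_ge0 x_incr] slack0 last_le]; split.
  move=> i; rewrite x_ge0 (le_trans _ last_le) // x_incr //=.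
  by rewrite -ltnS prednK ?ltn_ord // addn_gt0 a_gt0.
by move: slack0; rewrite /slack (bigD1 (idx_last a_gt0)) //=; lra.
Qed.

Unset Implicit Arguments.
Set Strict Implicit.

Theorem lemma4p5 (R : realType) (a b : nat) (ha : (1 <= a)%N) (hb : (2 <= b)%N) :
  exists N : set 'rV[R]_(a + b), lebesgue_null N /\
    forall x, Aset a b x -> ~ N x ->
      exists l : 'rV[R]_(a + b),
        (fun k : nat => iter k (Tab a b) x) @ \oo --> l /\ l != 0.
Proof.
exists (\bigcup_M [set x : 'rV[R]_(a + b) |
  [/\ Lambda x, slack ha x = 0 & x 0 (idx_last ha) <= M.+1%:R]]); split.
  apply: lebesgue_null_bigcup => [|M]; first by rewrite addn_gt0 ha.
  exact: jordan_null_slack_eq0.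
move=> x [Lx sum_le] x_notin_N.
apply: (Tab_orbit_limit_neq0 (a_gt0 := ha) (ltnW hb) hb Lx).
rewrite lt_neqAle {2}/slack subr_ge0 -coord_last sum_le andbT.
apply/eqP => slack0; apply: x_notin_N; exists (Num.truncn (x 0 (idx_last ha))) => //.
by split => //; apply/ltW/truncnS_gt.
Qed.
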